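(* Fix an integer $m\ge1$ and define numbers $r_n$ by $\sum_{n\ge0} r_n x^n=\dfrac{1}{1-x-x^m}$. Then for every $n\ge m+1$, $$r_{n-m-1}=\sum_{(a_1,\dots,a_k)\in C(n)}\Bigl\lfloor\frac{a_1-1}{m}\Bigr\rfloor\cdots\Bigl\lfloor\frac{a_k-1}{m}\Bigr\rfloor,$$ where the only nonzero terms come from compositions in which every part is at least $m+1$.
   Context: $C(n)$ denotes the set of all compositions $(a_1,\dots,a_k)$ of $n$ (finite sequences of positive integers with sum $n$), with any number $k$ of parts. *)

From mathcomp Require Import all_boot all_order all_algebra.
Set Implicit Arguments. Unset Strict Implicit. Unset Printing Implicit Defensive.
Import GRing.Theory.
Local Open Scope ring_scope.

(* [is_gf_inverse m r] : the formal power series sum_n r n x^n satisfies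
   (1 - x - x^m) * (sum_n r n x^n) = 1, i.e. r is the coefficient sequence of
   1/(1 - x - x^m).  Coefficient of x^n of the product, written out. *)
Definition is_gf_inverse (m : nat) (r : nat -> int) : Prop :=
  forall n : nat,
    r n - (if (1 <= n)%N then r n.-1 else 0)
        - (if (m <= n)%N then r (n - m)%N else 0)
    = (if n == 0%N then 1 else 0).

Definition is_composition (n : nat) (s : seq nat) : bool :=
  all (fun a => (0 < a)%N) s && (sumn s == n).

(* Sum over C(n) of prod_i floor((a_i - 1)/m).  Every composition of n has
   k <= n parts, each part <= n, so C(n) is enumerated by k-tuples over 'I_(n+1)
   for k <= n. *)
Definition comp_floor_sum (m n : nat) : nat :=
  \sum_(k < n.+1)
    \sum_(t : k.-tuple 'I_n.+1 | is_composition n (map val t))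
      \prod_(a <- map val t) ((a - 1) %/ m)%N.

From mathcomp Require Import all_boot all_order all_algebra zify.

(* Write w(a) = floor((a-1)/m) and let h(n) be the weighted
   count of all compositions of n, i.e. comp_floor_sum m n.  Splitting off the
   first part of a composition gives the convolution recurrence
       h(0) = 1,   h(n) = sum_(a <= n) w(a) h(n-a)   (n > 0).
   Since w(c+1) - w(c) is 1 exactly when c > 0 and m | c, the difference
   h(n+1) - h(n) is the "jump sum" sum_(j >= 1) h(n - j m), which satisfies
   J(n) = h(n-m) + J(n-m).  Combining the two gives the Fibonacci-like
       h(n+1) = h(n) + h(n+1-m)        for n >= m+1,
   together with h(n) = 0 for 0 < n <= m and h(m+1) = 1.  Hence the shifted
   sequence j |-> h(j+m+1) satisfies the defining recurrence of the
   coefficients of 1/(1-x-x^m); as that recurrence has a unique solution,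
   it equals r. *)

Section WeightedCompositions.

Variable m : nat.

Definition weight (a : nat) : nat := (a - 1) %/ m.

(* Zero-sized parts contribute nothing, so they may harmlessly enter sums. *)
Lemma weight0 : weight 0 = 0.
Proof. by rewrite /weight div0n. Qed.

(* [comp_count k n]: weighted count of compositions of n into k parts; parts
   equal to 0 are allowed in the sum but carry weight 0. *)
Fixpoint comp_count (k n : nat) : nat :=
  if k is k'.+1 then \sum_(a < n.+1) weight a * comp_count k' (n - a)
  else (n == 0 : nat).

Definition tuple_comp_sum (k N n : nat) : nat :=
  \sum_(t : k.-tuple 'I_N | is_composition n (map val t))
    \prod_(a <- map val t) weight a.

Lemma is_composition_cons n a s :
  is_composition n (a :: s) = [&& 0 < a, a <= n & is_composition (n - a) s].
Proof.
rewrite /is_composition /=; case: (leqP a n) => [le_an | lt_na].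
  by rewrite -{1}(subnKC le_an) eqn_add2l /= !andbA.
have -> : (a + sumn s == n) = false by apply/negbTE; rewrite neq_ltn; lia.
by rewrite !andbF.
Qed.

Lemma tuple_comp_sum_cons k N n :
  tuple_comp_sum k.+1 N n =
  \sum_(a : 'I_N) \sum_(t : k.-tuple 'I_N | is_composition n (val a :: map val t))
     \prod_(x <- val a :: map val t) weight x.
Proof.
rewrite /tuple_comp_sum (reindex (fun p : 'I_N * k.-tuple 'I_N => [tuple of p.1 :: p.2])).
  by rewrite pair_big_dep.
exists (fun t : k.+1.-tuple 'I_N => (thead t, [tuple of behead t])).
  by move=> [a t] _ /=; rewrite theadE; congr pair; apply: val_inj.
by move=> t _; rewrite [in RHS](tuple_eta t).
Qed.

Lemma tuple_comp_sumE k N n : n < N -> tuple_comp_sum k N n = comp_count k n.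
Proof.
elim: k n => [|k IH] n lt_nN.
  rewrite /tuple_comp_sum (eq_bigl (fun _ => n == 0)); last first.
    by move=> t; rewrite tuple0 /is_composition /= eq_sym.
  case: n lt_nN => [|n] _ /=; last by rewrite big_pred0.
  rewrite (big_pred1 [tuple]) ?big_nil // => t.
  by apply/esym/eqP; exact: tuple0.
rewrite tuple_comp_sum_cons /= (big_ord_widen N (fun a => weight a * comp_count k (n - a)) lt_nN).
rewrite [RHS]big_mkcond /=; apply: eq_bigr => a _.
have [a_ok | a_bad] := boolP ((0 < val a) && (val a <= n)).
- rewrite -IH; last by lia.
  rewrite /tuple_comp_sum big_distrr /= ltnS.
  have -> : val a <= n by case/andP: a_ok.
  apply: eq_big => [t | t _]; first by rewrite is_composition_cons andbA a_ok.
  by rewrite big_cons.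
- rewrite big_pred0 => [|t]; last by rewrite is_composition_cons andbA (negbTE a_bad).
  rewrite ltnS; case: ifP => // le_an.
  move: a_bad; rewrite le_an andbT lt0n negbK => /eqP ->.
  by rewrite weight0.
Qed.

Definition comp_total (n : nat) : nat := \sum_(k < n.+1) comp_count k n.

Lemma comp_floor_sumE n : comp_floor_sum m n = comp_total n.
Proof. by apply: eq_bigr => k _; exact: tuple_comp_sumE. Qed.

(* A composition of n with positive-weight parts has at most n parts. *)
Lemma comp_count_gt k n : n < k -> comp_count k n = 0.
Proof.
elim: k n => [|k IH] n //= lt_nk; apply: big1 => -[[|a] lt_an] _ /=.
  by rewrite weight0.
by rewrite IH ?muln0 //; lia.
Qed.

Lemma comp_total_bound M n : n < M -> \sum_(k < M) comp_count k n = comp_total n.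
Proof.
elim: M => [|M IH] // lt_nM; have [lt_nM' | | ->] := ltngtP n M => //; last lia.
by rewrite big_ord_recr /= IH // comp_count_gt // addn0.
Qed.

Lemma comp_total0 : comp_total 0 = 1.
Proof. by rewrite /comp_total big_ord1. Qed.

Lemma comp_total_rec n :
  0 < n -> comp_total n = \sum_(a < n.+1) weight a * comp_total (n - a).
Proof.
case: n => [|n] // _; rewrite /comp_total big_ord_recl add0n exchange_big /=.
apply: eq_bigr => -[[|a] lt_an] _ /=; rewrite -big_distrr /=.
  by rewrite weight0 mul0n.
by rewrite comp_total_bound //; lia.
Qed.

Lemma comp_total_rev n :
  0 < n -> comp_total n = \sum_(b < n.+1) weight (n - b) * comp_total b.
Proof.
move=> n_gt0; rewrite comp_total_rec // (reindex_inj rev_ord_inj) /=.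
by apply: eq_bigr => b _; rewrite subSS subKn // -ltnS.
Qed.

Lemma comp_total_small n : 0 < n <= m -> comp_total n = 0.
Proof.
move=> /andP [n_gt0 le_nm]; rewrite comp_total_rec //; apply: big1 => a _.
by rewrite /weight divn_small ?mul0n //; have := ltn_ord a; lia.
Qed.

Hypothesis m_gt0 : 0 < m.

(* Only the composition (m+1) contributes to h(m+1). *)
Lemma comp_total_m1 : comp_total m.+1 = 1.
Proof.
rewrite comp_total_rec // big_ord_recr /= subnn comp_total0 muln1.
rewrite /weight subn1 /= divnn m_gt0 big1 // => a _.
by rewrite divn_small ?mul0n //; have := ltn_ord a; lia.
Qed.

Lemma weight_succ c : weight c.+1 = weight c + ((0 < c) && (m %| c)).
Proof.
rewrite /weight subn1 /=; case: c => [|c] /=; first by rewrite div0n.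
by rewrite subn1 divnS // addnC.
Qed.

(* [jump_sum n] = sum_(j >= 1) h(n - j m). *)
Definition jump_sum (n : nat) : nat :=
  \sum_(b < n.+1) ((0 < n - b) && (m %| n - b)) * comp_total b.

(* h(p+1) - h(p) is the jump sum, by weight_succ applied termwise. *)
Lemma comp_total_succ p : 0 < p -> comp_total p.+1 = comp_total p + jump_sum p.
Proof.
move=> p_gt0; rewrite comp_total_rev // big_ord_recr /= subnn weight0 mul0n addn0.
rewrite comp_total_rev // /jump_sum -big_split /=; apply: eq_bigr => b _.
have le_bp : b <= p by rewrite -ltnS.
by rewrite -mulnDl subSn // weight_succ.
Qed.

(* Peeling off the term j = 1 of the jump sum. *)
Lemma jump_sum_rec n : m <= n -> jump_sum n = comp_total (n - m) + jump_sum (n - m).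
Proof.
move=> le_mn; rewrite /jump_sum.
rewrite -!(big_mkord xpredT (fun b => ((0 < _ - b) && (m %| _ - b)) * comp_total b)).
rewrite (big_cat_nat (n := n - m)) //=; last by lia.
rewrite [in RHS]big_nat_recr //= subnn mul0n addn0 [RHS]addnC; congr (_ + _).
  apply: eq_big_nat => b lt_b; have -> : n - b = (n - m - b) + m by lia.
  rewrite dvdn_addl ?dvdnn //; congr (((_ : bool) : nat) * _).
  by apply/idP/idP => /andP [_ ->]; rewrite andbT; lia.
rewrite big_ltn; last by lia.
have -> : n - (n - m) = m by lia.
rewrite m_gt0 dvdnn mul1n big1_seq ?addn0 // => b /andP [_].
rewrite mem_index_iota => lt_b.
have [pos_nb | ] := boolP (0 < n - b) => //=.
suff /negbTE -> : ~~ (m %| n - b) by [].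
by apply/negP => /(dvdn_leq pos_nb); lia.
Qed.

Lemma comp_total_fib n : m.+1 <= n -> comp_total n.+1 = comp_total n + comp_total (n.+1 - m).
Proof.
move=> le_m1n; rewrite comp_total_succ; last by lia.
rewrite jump_sum_rec; last by lia.
have -> : n.+1 - m = (n - m).+1 by lia.
by rewrite (comp_total_succ (n - m)) ?addnA //; lia.
Qed.

End WeightedCompositions.

Import GRing.Theory.
Local Open Scope ring_scope.

Lemma gf_inverse_expand {m r} : is_gf_inverse m r -> forall n,
  r n = (if n == 0%N then 1 else 0) + (if (1 <= n)%N then r n.-1 else 0)
        + (if (m <= n)%N then r (n - m)%N else 0).
Proof. by move=> gf_r n; rewrite -(gf_r n) addrAC !subrK. Qed.

Lemma gf_inverse_unique {m r r'} :
  (0 < m)%N -> is_gf_inverse m r -> is_gf_inverse m r' -> r =1 r'.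
Proof.
move=> m_gt0 gf_r gf_r'; elim/ltn_ind => n IH.
rewrite (gf_inverse_expand gf_r) (gf_inverse_expand gf_r').
by congr (_ + _ + _); case: ifP => // ?; apply: IH; lia.
Qed.

Lemma comp_total_gf_inverse m :
  (0 < m)%N -> is_gf_inverse m (fun j => (comp_total m (j + m.+1))%:Z).
Proof.
move=> m_gt0 [|n] /=.
  by rewrite comp_total_m1 // leqn0 (negbTE (lt0n_neq0 m_gt0)) !subr0.
rewrite addSn comp_total_fib //; last by lia.
have -> : ((n + m.+1).+1 - m = n.+2)%N by lia.
case: ifP => [le_mn | /negbT lt_nm]; last first.
  by rewrite (comp_total_small m n.+2) ?addn0 ?subr0 ?subrr //; lia.
have -> : (n.+1 - m + m.+1 = n.+2)%N by lia.
by rewrite PoszD [_ + Posz _]addrC addrK subrr.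
Qed.

Theorem proposition7 (m : nat) (r : nat -> int) :
  (1 <= m)%N -> is_gf_inverse m r ->
  forall n : nat, (m.+1 <= n)%N ->
    r (n - m.+1)%N = ((comp_floor_sum m n)%:Z).
Proof.
move=> m_gt0 gf_r n le_m1n.
rewrite (gf_inverse_unique m_gt0 gf_r (comp_total_gf_inverse m m_gt0)) /=.
by rewrite subnK // comp_floor_sumE.
Qed.
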